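(* Let $r>0$, $\kappa>0$, $\tau>0$, $p\in[0,1]$ with $\varepsilon=pe^{-\tau}<1$, and let $q\in\mathbb{R}$. Let $H:\mathcal{C}\to\mathbb{R}$, \[ H(\phi)=1-\phi_S(0)-\phi_I(-\kappa)+\int_{-\kappa}^{0}\big(1-r\phi_S(s)\big)\phi_I(s)\,ds, \] and $\mathcal{F}_q:=H^{-1}(q)$. Then: (1) $\mathcal{F}_q\cap\mathcal{E}_0=\{\widehat{u(q)}\}$, where $u(q)=(1-q,0,q)$. (2) $\mathcal{F}_q\cap\mathcal{E}_I=\{\widehat{v(q)}\}$, where $v(q)=(v_S,v_I(q),v_Q(q))$ with $v_S=\frac{1}{r(1-\varepsilon)}$, \[ v_I(q)=\frac{1-\varepsilon}{1-\varepsilon+\varepsilon\kappa}(q_c-q),\qquad v_Q(q)=\frac{\varepsilon\kappa}{1-\varepsilon+\varepsilon\kappa}(q_c-q)+q, \] and $q_c=1-\frac{1}{r}\frac{1}{1-\varepsilon}$.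
   Context: $\mathcal{C}=\{\phi\in C([-\tau-\kappa,0],\mathbb{R}^3):\phi_S+\phi_I+\phi_Q\equiv1\}$, the phase space of the SIQ delay system $\dot S=-rSI+I+r\varepsilon (SI)(t-\tau-\kappa)$, $\dot I=rSI-I-r\varepsilon(SI)(t-\tau)$, $\dot Q=r\varepsilon[(SI)(t-\tau)-(SI)(t-\tau-\kappa)]$. For $u\in\mathbb{R}^3$ with $u_1+u_2+u_3=1$, $\hat u$ is the constant function with value $u$. $\mathcal{E}_0=\{\hat\phi\in\mathcal{C}\text{ constant}:\phi_I=0\}$ (disease-free equilibria) and $\mathcal{E}_I=\{\hat\phi\in\mathcal{C}\text{ constant}:\phi_S=\frac{1}{r(1-\varepsilon)}\}$. *)

From Stdlib Require Import Reals.
From Coquelicot Require Import Coquelicot.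
Open Scope R_scope.

(* An element of C([-tau-kappa,0], R^3), given by its three components.
   Values outside [-tau-kappa,0] are irrelevant; all notions below only
   look at the interval. *)
Record state := mkState { phS : R -> R; phI : R -> R; phQ : R -> R }.

Definition in_dom (tau kappa s : R) : Prop := - tau - kappa <= s <= 0.

Definition cont_on_dom (tau kappa : R) (f : R -> R) : Prop :=
  forall s, in_dom tau kappa s ->
  forall eps, 0 < eps -> exists delta, 0 < delta /\
    forall t, in_dom tau kappa t -> Rabs (t - s) < delta -> Rabs (f t - f s) < eps.

Definition inC (tau kappa : R) (phi : state) : Prop :=
  cont_on_dom tau kappa (phS phi) /\ cont_on_dom tau kappa (phI phi) /\
  cont_on_dom tau kappa (phQ phi) /\
  forall s, in_dom tau kappa s -> phS phi s + phI phi s + phQ phi s = 1.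

Definition hat (a b c : R) : state :=
  mkState (fun _ => a) (fun _ => b) (fun _ => c).

Definition eqC (tau kappa : R) (phi psi : state) : Prop :=
  forall s, in_dom tau kappa s ->
    phS phi s = phS psi s /\ phI phi s = phI psi s /\ phQ phi s = phQ psi s.

Definition inE0 (tau kappa : R) (phi : state) : Prop :=
  inC tau kappa phi /\ exists a b c, eqC tau kappa phi (hat a b c) /\ b = 0.

Definition inEI (r eps tau kappa : R) (phi : state) : Prop :=
  inC tau kappa phi /\
  exists a b c, eqC tau kappa phi (hat a b c) /\ a = 1 / (r * (1 - eps)).

Definition Hfun (r kappa : R) (phi : state) : R :=
  1 - phS phi 0 - phI phi (- kappa)
    + RInt (fun s => (1 - r * phS phi s) * phI phi s) (- kappa) 0.

(* H is constant on constant states: for the value (a, b, c) it equals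
   1 - a - b + kappa (1 - r a) b, and on such states membership in C reduces
   to a + b + c = 1.  On E_0 (b = 0) this gives H = 1 - a, and on E_I
   (a = 1/(r(1-eps))) it gives H = q_c - b (1 - eps + eps kappa)/(1 - eps),
   an affine function of b with nonzero slope; in both cases the level set
   H = q therefore pins down the constant uniquely. *)
From Stdlib Require Import Reals Lra.
From Coquelicot Require Import Coquelicot.
Open Scope R_scope.

Definition Hfun_const (r kappa a b : R) : R := 1 - a - b + kappa * ((1 - r * a) * b).

Lemma cont_on_dom_const tau kappa (v : R) : cont_on_dom tau kappa (fun _ => v).
Proof.
  intros s _ e he. exists 1. split; [lra|]. intros t _ _.
  replace (v - v) with 0 by ring. rewrite Rabs_R0. exact he.
Qed.

Lemma inC_hat tau kappa a b c : a + b + c = 1 -> inC tau kappa (hat a b c).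
Proof.
  intros Hsum.
  split; [apply (cont_on_dom_const tau kappa a) |].
  split; [apply (cont_on_dom_const tau kappa b) |].
  split; [apply (cont_on_dom_const tau kappa c) |].
  intros s _. exact Hsum.
Qed.

Section ConstantStates.

Variables (r kappa tau : R).
Hypotheses (kappa_ge0 : 0 <= kappa) (tau_ge0 : 0 <= tau).

Lemma in_dom_0 : in_dom tau kappa 0.
Proof. unfold in_dom; lra. Qed.

Lemma in_dom_sub_interval s : - kappa <= s <= 0 -> in_dom tau kappa s.
Proof. unfold in_dom; lra. Qed.

Lemma eqC_hat_sum phi a b c :
  inC tau kappa phi -> eqC tau kappa phi (hat a b c) -> a + b + c = 1.
Proof.
  intros [_ [_ [_ Hsum]]] E.
  destruct (E 0 in_dom_0) as [ES [EI EQ]].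
  simpl in *. rewrite <- ES, <- EI, <- EQ. exact (Hsum 0 in_dom_0).
Qed.

Lemma Hfun_eqC_hat phi a b c :
  eqC tau kappa phi (hat a b c) -> Hfun r kappa phi = Hfun_const r kappa a b.
Proof.
  intros E. unfold Hfun, Hfun_const.
  destruct (E 0 in_dom_0) as [ES _].
  destruct (E (- kappa) (in_dom_sub_interval (- kappa) ltac:(split; lra))) as [_ [EI _]].
  rewrite ES, EI.
  rewrite (RInt_ext _ (fun _ => (1 - r * a) * b)).
  - rewrite RInt_const. unfold scal; simpl; unfold mult; simpl. lra.
  - intros s Hs. rewrite Rmin_left in Hs by lra. rewrite Rmax_right in Hs by lra.
    destruct (E s (in_dom_sub_interval s ltac:(split; lra))) as [FS [FI _]].
    simpl in FS, FI. rewrite FS, FI. reflexivity.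
Qed.

(* E_0 and E_I are the instances [cond a b := b = 0] and
   [cond a b := a = 1/(r(1-eps))]. *)
Lemma level_set_constants (cond : R -> R -> Prop) q a0 b0 c0 :
  a0 + b0 + c0 = 1 ->
  (forall a b c, a + b + c = 1 ->
     (Hfun_const r kappa a b = q /\ cond a b <-> a = a0 /\ b = b0 /\ c = c0)) ->
  forall phi, inC tau kappa phi ->
    (Hfun r kappa phi = q /\
       (inC tau kappa phi /\ exists a b c, eqC tau kappa phi (hat a b c) /\ cond a b)
     <-> eqC tau kappa phi (hat a0 b0 c0)).
Proof.
  intros Hsum0 Hcond phi HC. split.
  - intros [HH [_ [a [b [c [E Hab]]]]]].
    rewrite (Hfun_eqC_hat _ _ _ _ E) in HH.
    destruct (proj1 (Hcond a b c (eqC_hat_sum _ _ _ _ HC E)) (conj HH Hab))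
      as [-> [-> ->]].
    exact E.
  - intros E.
    destruct (proj2 (Hcond a0 b0 c0 Hsum0) (conj eq_refl (conj eq_refl eq_refl)))
      as [HH Hab].
    rewrite (Hfun_eqC_hat _ _ _ _ E).
    split; [exact HH | split; [exact HC | exists a0, b0, c0; split; assumption]].
Qed.

End ConstantStates.

Lemma Hfun_const_disease_free r kappa q a b c :
  a + b + c = 1 ->
  (Hfun_const r kappa a b = q /\ b = 0 <-> a = 1 - q /\ b = 0 /\ c = q).
Proof.
  unfold Hfun_const. intros Hsum.
  split; [intros [HH ->] | intros [-> [-> ->]]]; rewrite !Rmult_0_r in *; lra.
Qed.

Lemma Hfun_const_endemic r kappa eps b :
  0 < r -> eps < 1 ->
  Hfun_const r kappa (1 / (r * (1 - eps))) b
  = (1 - (1 / r) * (1 / (1 - eps))) - (1 - eps + eps * kappa) / (1 - eps) * b.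
Proof. intros Hr Heps. unfold Hfun_const. field. lra. Qed.

Lemma Hfun_const_endemic_level r kappa eps q a b c :
  0 < r -> 0 <= kappa -> 0 <= eps < 1 -> a + b + c = 1 ->
  let qc := 1 - (1 / r) * (1 / (1 - eps)) in
  let vS := 1 / (r * (1 - eps)) in
  let vI := (1 - eps) / (1 - eps + eps * kappa) * (qc - q) in
  let vQ := (eps * kappa) / (1 - eps + eps * kappa) * (qc - q) + q in
  (Hfun_const r kappa a b = q /\ a = vS <-> a = vS /\ b = vI /\ c = vQ).
Proof.
  intros Hr Hkappa Heps Hsum qc vS vI vQ.
  assert (slope_pos : 0 < 1 - eps + eps * kappa) by nra.
  assert (Hsum_v : vS + vI + vQ = 1) by (unfold vS, vI, vQ, qc; field; lra).
  split.
  - intros [HH ->].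
    unfold vS in HH. rewrite Hfun_const_endemic in HH by lra. fold qc in HH.
    assert (Hb : b = vI) by (unfold vI; rewrite <- HH; field; lra).
    repeat split; [exact Hb | lra].
  - intros [-> [-> _]]. split; [| reflexivity].
    unfold vS. rewrite Hfun_const_endemic by lra. fold qc. unfold vI. field. lra.
Qed.

Theorem theorem7 (r kappa tau p q : R) :
  0 < r -> 0 < kappa -> 0 < tau -> 0 <= p <= 1 -> p * exp (- tau) < 1 ->
  let eps := p * exp (- tau) in
  let qc := 1 - (1 / r) * (1 / (1 - eps)) in
  let vS := 1 / (r * (1 - eps)) in
  let vI := (1 - eps) / (1 - eps + eps * kappa) * (qc - q) in
  let vQ := (eps * kappa) / (1 - eps + eps * kappa) * (qc - q) + q in
  (* (1)  F_q ∩ E_0 = { hat u(q) },  u(q) = (1-q, 0, q) *)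
  (inC tau kappa (hat (1 - q) 0 q) /\
   forall phi : state, inC tau kappa phi ->
     (Hfun r kappa phi = q /\ inE0 tau kappa phi <->
      eqC tau kappa phi (hat (1 - q) 0 q))) /\
  (* (2)  F_q ∩ E_I = { hat v(q) } *)
  (inC tau kappa (hat vS vI vQ) /\
   forall phi : state, inC tau kappa phi ->
     (Hfun r kappa phi = q /\ inEI r eps tau kappa phi <->
      eqC tau kappa phi (hat vS vI vQ))).
Proof.
  intros Hr Hkappa Htau Hp Heps eps qc vS vI vQ.
  assert (eps_range : 0 <= eps < 1).
  { split; [apply Rmult_le_pos; [lra | left; apply exp_pos] | exact Heps]. }
  assert (slope_pos : 0 < 1 - eps + eps * kappa) by nra.
  assert (Hsum_v : vS + vI + vQ = 1) by (unfold vS, vI, vQ, qc; field; lra).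
  split; split.
  - apply inC_hat. ring.
  - apply (level_set_constants r kappa tau (Rlt_le _ _ Hkappa) (Rlt_le _ _ Htau)
             (fun _ b => b = 0)); [ring | apply Hfun_const_disease_free].
  - exact (inC_hat _ _ _ _ _ Hsum_v).
  - apply (level_set_constants r kappa tau (Rlt_le _ _ Hkappa) (Rlt_le _ _ Htau)
             (fun a _ => a = vS)); [exact Hsum_v |].
    intros a b c Hsum. exact (Hfun_const_endemic_level r kappa eps q a b c
                                Hr (Rlt_le _ _ Hkappa) eps_range Hsum).
Qed.
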